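(* Let $\mathcal G$ be a tree on $n\ge2$ nodes, with oriented incidence matrix $D_\tau\in\mathbb R^{n\times(n-1)}$, edge-weight matrix $W=\rho I$ for some $\rho>0$, and time-scale matrix $E=\mathrm{diag}(\epsilon_1,\dots,\epsilon_n)$, $\epsilon_i>0$; let $L_{e,s}^\tau=D_\tau^TE^{-1}D_\tau$ and $\sigma_w,\sigma_v$ real scalars. Consider $$\tilde\Sigma_\tau(s)=\big(sI+L_{e,s}^\tau W\big)^{-1}\begin{bmatrix}\sigma_wD_\tau^TE^{-1/2} & -\sigma_vL_{e,s}^\tau W^{1/2}\end{bmatrix},\qquad\Pi_\tau(s)=W^{1/2}\tilde\Sigma_\tau(s).$$ Then $$\|\tilde\Sigma_\tau\|_\infty^2=\frac1\rho\|\Pi_\tau\|_\infty^2=\frac{1}{\rho^2}\sigma_w^2\,\bar\sigma\big((L_{e,s}^\tau)^{-1}\big)+\frac1\rho\sigma_v^2=L=U,$$ where $L=\max\{L_1,L_2\}$ with $L_1=\dfrac{\sigma_w^2+\sigma_v^2\lambda_{\min}(L_{e,s}^\tau)\lambda_{\max}(W^{1/2})^2}{\lambda_{\min}(L_{e,s}^\tau)\lambda_{\max}(W^{1/2})^4}$, $L_2=\dfrac{\sigma_w^2+\sigma_v^2\lambda_{\max}(L_{e,s}^\tau)\lambda_{\max}(W^{1/2})\lambda_{\min}(W^{1/2})}{\lambda_{\max}(L_{e,s}^\tau)\lambda_{\max}(W^{1/2})^3\lambda_{\min}(W^{1/2})}$, and $U=\dfrac{\sigma_w^2+\sigma_v^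2\lambda_{\min}(L_{e,s}^\tau)\lambda_{\min}(W^{1/2})^2}{\lambda_{\min}(L_{e,s}^\tau)\lambda_{\min}(W^{1/2})^4}$.
   Context: The incidence matrix of a graph with an arbitrary orientation of each edge has entry $1$ in row $i$, column $l$ if node $i$ is the initial node of edge $l$, $-1$ if it is the terminal node, and $0$ otherwise. Powers of positive diagonal matrices are taken entrywise. $\lambda_{\max},\lambda_{\min}$ denote the largest and smallest eigenvalues of a symmetric matrix. For a stable transfer matrix $\Phi(s)$, $\|\Phi\|_\infty=\sup_{\omega\in\mathbb R}\bar\sigma(\Phi(j\omega))$ where $\bar\sigma$ is the largest singular value. *)

From HB Require Import structures.
From mathcomp Require Import all_boot all_order all_algebra.
From mathcomp Require Import boolp classical_sets reals.
From mathcomp.real_closed Require Import complex.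

Set Implicit Arguments.
Unset Strict Implicit.
Unset Printing Implicit Defensive.

Import Order.TTheory GRing.Theory Num.Theory.
Local Open Scope ring_scope.
Local Open Scope classical_set_scope.
Local Open Scope complex_scope.

Definition oriented_edge_col {R : realType} n m (D : 'M[R]_(n, m)) (l : 'I_m) :=
  exists i j : 'I_n, [/\ i != j, D i l = 1, D j l = -1 &
    forall k, k != i -> k != j -> D k l = 0].

Definition inc_adj {R : realType} n m (D : 'M[R]_(n, m)) : rel 'I_n :=
  fun i j => (i != j) && [exists l, (D i l != 0) && (D j l != 0)].

(* A simple connected graph with n nodes and n-1 edges is exactly a tree. *)
Definition tree_incidence {R : realType} n (D : 'M[R]_(n, n.-1)) :=
  [/\ forall l, oriented_edge_col D l,
      forall l1 l2 : 'I_n.-1, l1 != l2 ->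
        exists k, D k l1 != 0 /\ D k l2 == 0 &
      forall i j : 'I_n, connect (inc_adj D) i j].

Definition dsqrt {R : realType} k (A : 'M[R]_k) : 'M[R]_k :=
  \matrix_(i, j) (if i == j then Num.sqrt (A i i) else 0).

Definition lam_max {R : realType} k (A : 'M[R]_k) : R :=
  sup [set x : R | eigenvalue A x].
Definition lam_min {R : realType} k (A : 'M[R]_k) : R :=
  inf [set x : R | eigenvalue A x].

(* largest eigenvalue of a complex Hermitian matrix (its eigenvalues are real) *)
Definition lam_maxC {R : realType} k (A : 'M[R[i]]_k) : R :=
  sup [set x : R | eigenvalue A x%:C].

Definition ctrmx {R : realType} p q (A : 'M[R[i]]_(p, q)) : 'M[R[i]]_(q, p) :=
  (map_mx (@conjc R) A)^T.

Definition sv_maxC {R : realType} p q (A : 'M[R[i]]_(p, q)) : R :=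
  Num.sqrt (lam_maxC (ctrmx A *m A)).

Definition sv_max {R : realType} p q (A : 'M[R]_(p, q)) : R :=
  Num.sqrt (lam_max (A^T *m A)).

Definition Hinf_norm {R : realType} p q (Phi : R[i] -> 'M[R[i]]_(p, q)) : R :=
  sup [set sv_maxC (Phi ('i * w%:C)) | w in [set: R]].

Definition toCmx {R : realType} p q (A : 'M[R]_(p, q)) : 'M[R[i]]_(p, q) :=
  map_mx (fun x : R => x%:C) A.

Definition Les {R : realType} n (D : 'M[R]_(n, n.-1)) (E : 'M[R]_n) :=
  D^T *m invmx E *m D.

Definition Sigma_t {R : realType} n (D : 'M[R]_(n, n.-1)) (E : 'M[R]_n)
    (W : 'M[R]_n.-1) (sw sv : R) (s : R[i]) : 'M[R[i]]_(n.-1, n + n.-1) :=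
  invmx (s%:M + toCmx (Les D E *m W)) *m
    toCmx (row_mx (sw *: (D^T *m dsqrt (invmx E)))
                  (- (sv *: (Les D E *m dsqrt W)))).

Definition Pi_t {R : realType} n (D : 'M[R]_(n, n.-1)) (E : 'M[R]_n)
    (W : 'M[R]_n.-1) (sw sv : R) (s : R[i]) : 'M[R[i]]_(n.-1, n + n.-1) :=
  toCmx (dsqrt W) *m Sigma_t D E W sw sv s.

From HB Require Import structures.
From mathcomp Require Import all_boot all_order all_algebra.
From mathcomp Require Import boolp classical_sets reals.
From mathcomp.real_closed Require Import complex.
From mathcomp Require Import ring zify.

(* A tree's incidence matrix D has full column rank, so L = D^T E^-1 D is symmetric
   positive definite: L = V diag(r) V^* with V unitary and r > 0.  With W = rho I the
   input matrix B of Sigma_t satisfies B B^T = sw^2 L + sv^2 rho L^2, hence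
   Sigma_t(iw) Sigma_t(iw)^* = V diag(phi_j(w)) V^* with
     phi_j(w) = (sw^2 r_j + sv^2 rho r_j^2) / (w^2 + rho^2 r_j^2).
   Each phi_j peaks at w = 0 with value sw^2 / (rho^2 r_j) + sv^2 / rho, which is
   largest for r_j = lam_min L: this is the squared H-infinity norm.  Since
   W^(1/2) = sqrt rho I, Pi_t = sqrt rho Sigma_t, and L1, L2, U are all such
   zero-frequency gains, the largest one being attained at lam_min L. *)

Set Implicit Arguments.
Unset Strict Implicit.
Unset Printing Implicit Defensive.

Import Order.TTheory GRing.Theory Num.Theory.
Local Open Scope ring_scope.

Section Extrema.
Variable R : realType.
Implicit Types (E : set R).

Lemma sup_attained E x0 : E x0 -> (forall x, E x -> x <= x0) -> sup E = x0.
Proof.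
move=> Ex0 ub; apply/le_anti/andP; split.
  by apply: ge_sup; [exists x0 | move=> x /ub].
by apply: ub_le_sup => //; exists x0 => x /ub.
Qed.

Lemma inf_attained E x0 : E x0 -> (forall x, E x -> x0 <= x) -> inf E = x0.
Proof.
move=> Ex0 lb; apply/le_anti/andP; split; last first.
  by apply: lb_le_inf; [exists x0 | move=> x /lb].
by apply: ge_inf => //; exists x0 => x /lb.
Qed.

Lemma argmax_exists (T : finType) (i0 : T) (f : T -> R) :
  exists j, forall i, f i <= f j.
Proof. by case: (arg_maxP f (isT : xpredT i0)) => j _ fj; exists j => i; apply: fj. Qed.

Lemma argmin_exists (T : finType) (i0 : T) (f : T -> R) :
  exists j, forall i, f j <= f i.
Proof. by case: (arg_minP f (isT : xpredT i0)) => j _ fj; exists j => i; apply: fj. Qed.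

End Extrema.

Section ConjmxUnit.
Variables (F : fieldType) (k : nat) (V : 'M[F]_k).
Hypothesis Vu : V \in unitmx.

Lemma conjmxD f g : conjmx V (f + g) = conjmx V f + conjmx V g.
Proof. by rewrite /conjmx mulmxDr mulmxDl. Qed.

Lemma conjmxZ a f : conjmx V (a *: f) = a *: conjmx V f.
Proof. by rewrite /conjmx -scalemxAr -scalemxAl. Qed.

Lemma conjmxM_unit f g : conjmx V (f *m g) = conjmx V f *m conjmx V g.
Proof. by rewrite conjmxM // inE stablemx_unit. Qed.

Lemma conjmx_scalar_unit a : conjmx V a%:M = a%:M.
Proof. by rewrite conjmx_scalar ?row_free_unit. Qed.

Lemma conjmxV f : f \in unitmx -> invmx (conjmx V f) = conjmx V (invmx f).
Proof.
move=> fu; have VfV : conjmx V f *m conjmx V (invmx f) = 1%:M.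
  by rewrite -conjmxM_unit mulmxV // conjmx_scalar_unit.
by rewrite -[LHS]mulmx1 -VfV mulmxA mulVmx ?mul1mx //; case: (mulmx1_unit VfV).
Qed.

Lemma eigenvalue_conjmx_unit f a : eigenvalue (conjmx V f) a = eigenvalue f a.
Proof.
have sub W g : W \in unitmx -> {subset eigenvalue (conjmx W g) <= eigenvalue g}.
  by move=> Wu; apply: eigenvalue_conjmx; rewrite ?stablemx_unit ?row_free_unit.
apply/idP/idP; first exact: sub.
by rewrite -{1}(conjmxK f Vu); apply: sub; rewrite unitmx_inv.
Qed.

End ConjmxUnit.

Lemma eigenvalue_diag (F : fieldType) k (d : 'rV[F]_k) a :
  reflect (exists j, a = d 0 j) (eigenvalue (diag_mx d) a).
Proof.
rewrite eigenvalue_root_char char_poly_trig ?diag_mx_is_trig //.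
rewrite -(big_map (fun j => diag_mx d j j) xpredT (fun x => 'X - x%:P)) root_prod_XsubC.
by apply: (iffP mapP) => -[j]; [move=> _ ->| move=> ->]; exists j;
  rewrite ?mem_index_enum // mxE eqxx mulr1n.
Qed.

Section MulmxEigen.
Variables (F : fieldType) (m p : nat) (A : 'M[F]_(m, p)) (B : 'M[F]_(p, m)).

Lemma eigenvalue_mulmxC x : x != 0 -> eigenvalue (A *m B) x -> eigenvalue (B *m A) x.
Proof.
move=> x0 /eigenvalueP [v vAB v0]; apply/eigenvalueP; exists (v *m A).
  by rewrite mulmxA -(mulmxA v) vAB -scalemxAl.
apply: contra v0 => /eqP vA0; have := congr1 (mulmx^~ B) vA0.
by rewrite mul0mx -mulmxA vAB => /eqP; rewrite scalemx_eq0 (negPf x0).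
Qed.

Lemma eigenvalue0_mulmx : (m < p)%N -> eigenvalue (B *m A) 0.
Proof.
move=> mp; have : kermx B != 0.
  rewrite kermx_eq0 /row_free; apply: contraTneq mp => <-.
  by rewrite -leqNgt rank_leq_col.
case/rowV0Pn => v /sub_kermxP vB v0; apply/eigenvalueP; exists v => //.
by rewrite mulmxA vB mul0mx scale0r.
Qed.

End MulmxEigen.

Section DiagInverse.
Variables (F : fieldType) (k : nat) (d : 'rV[F]_k).
Hypothesis d_neq0 : forall j, d 0 j != 0.

Lemma mulmx_diag_inv : diag_mx d *m diag_mx (\row_j (d 0 j)^-1) = 1%:M.
Proof.
rewrite mulmx_diag -diag_const_mx; congr diag_mx.
by apply/rowP => j; rewrite !mxE divff.
Qed.

Lemma diag_mx_unit : diag_mx d \in unitmx.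
Proof. by case: (mulmx1_unit mulmx_diag_inv). Qed.

Lemma invmx_diag : invmx (diag_mx d) = diag_mx (\row_j (d 0 j)^-1).
Proof. by rewrite -[LHS]mulmx1 -mulmx_diag_inv mulmxA mulVmx ?diag_mx_unit ?mul1mx. Qed.

End DiagInverse.

Lemma quad_diag_gt0 (R : realDomainType) k (b d : 'rV[R]_k) :
  b != 0 -> (forall i, 0 < d 0 i) -> 0 < (b *m diag_mx d *m b^T) 0 0.
Proof.
move=> b0 d_gt0; have [i0 bi0] : exists i, b 0 i != 0.
  apply/existsP; apply: contraNT b0 => /existsPn bi.
  by apply/eqP/rowP => j; rewrite mxE; apply/eqP/negPn.
have term_ge0 i : 0 <= (b *m diag_mx d) 0 i * b^T i 0.
  by rewrite mul_mx_diag !mxE mulrAC -expr2 mulr_ge0 ?sqr_ge0 ?ltW ?d_gt0.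
rewrite mxE (bigD1 i0) //= ltr_wpDr ?sumr_ge0 //.
by rewrite mul_mx_diag !mxE mulrAC -expr2 mulr_gt0 ?d_gt0 // lt_def sqrf_eq0 bi0 sqr_ge0.
Qed.

Section ComplexMatrices.
Variable R : realType.
Local Notation C := R[i].
Local Open Scope complex_scope.
Local Open Scope sesquilinear_scope.

Lemma toCmxE p q (A : 'M[R]_(p, q)) : toCmx A = A ^ (real_complex R).
Proof. by []. Qed.

Lemma toCmxM p q r (A : 'M[R]_(p, q)) (B : 'M[R]_(q, r)) :
  toCmx (A *m B) = toCmx A *m toCmx B.
Proof. by rewrite !toCmxE map_mxM. Qed.

Lemma toCmxD p q (A B : 'M[R]_(p, q)) : toCmx (A + B) = toCmx A + toCmx B.
Proof. by rewrite !toCmxE map_mxD. Qed.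

Lemma toCmxZ p q a (A : 'M[R]_(p, q)) : toCmx (a *: A) = a%:C *: toCmx A.
Proof. by rewrite !toCmxE map_mxZ. Qed.

Lemma toCmxV k (A : 'M[R]_k) : toCmx (invmx A) = invmx (toCmx A).
Proof. by rewrite !toCmxE map_invmx. Qed.

Lemma toCmx_trC p q (A : 'M[R]_(p, q)) : (toCmx A)^t* = toCmx A^T.
Proof. by apply/matrixP => i j; rewrite !mxE; apply: conjc_real. Qed.

Lemma ctrmxE p q (A : 'M[C]_(p, q)) : ctrmx A = A^t*.
Proof. by apply/matrixP => i j; rewrite !mxE. Qed.

Lemma trC_scale p q (a : C) (X : 'M[C]_(p, q)) : (a *: X)^t* = a^* *: X^t*.
Proof. by apply/matrixP => i j; rewrite !mxE rmorphM. Qed.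

Lemma trC_mul p q r (X : 'M[C]_(p, q)) (Y : 'M[C]_(q, r)) : (X *m Y)^t* = Y^t* *m X^t*.
Proof. by rewrite trmx_mul map_mxM. Qed.

Lemma trC_diag k (d : 'rV[C]_k) : (diag_mx d)^t* = diag_mx (map_mx (@conjc R) d).
Proof. by rewrite tr_diag_mx map_diag_mx. Qed.

Lemma conjmx_trC k (V f : 'M[C]_k) : V \is unitarymx -> (conjmx V f)^t* = conjmx V (f^t*).
Proof. by move=> Vu; rewrite !conjymx // !trC_mul trmxCK mulmxA. Qed.

Lemma real_symmetric_spectral k (A : 'M[R]_k) : A^T = A ->
  exists V : 'M[C]_k, exists r : 'rV[R]_k,
    V \is unitarymx /\ toCmx A = conjmx V (diag_mx (toCmx r)).
Proof.
move=> AT; have herm : toCmx A \is hermsymmx.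
  by apply/is_hermitianmxP; rewrite expr0 scale1r toCmx_trC AT.
have /mxOverP real_diag := hermitian_spectral_diag_real herm.
have /orthomx_spectralP eA := hermitian_normalmx herm.
have Pu := spectral_unitarymx (toCmx A).
exists ((spectralmx (toCmx A))^t*), (\row_j complex.Re (spectral_diag (toCmx A) 0 j)).
split; first by rewrite trmxC_unitary.
have -> : toCmx (\row_j complex.Re (spectral_diag (toCmx A) 0 j)) = spectral_diag (toCmx A).
  by apply/rowP => j; rewrite !mxE RRe_real.
by rewrite conjymx ?trmxC_unitary // trmxCK -(invmx_unitary Pu).
Qed.

Lemma eigenvalue_real_spectral k (A : 'M[R]_k) (V : 'M[C]_k) (r : 'rV[R]_k) x :
  V \in unitmx -> toCmx A = conjmx V (diag_mx (toCmx r)) ->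
  reflect (exists j, x = r 0 j) (eigenvalue A x).
Proof.
move=> Vu eA; rewrite -(eigenvalue_map (real_complex R)) -toCmxE eA.
rewrite eigenvalue_conjmx_unit //; apply: (iffP (eigenvalue_diag _ _)).
  by case=> j; rewrite mxE => /complexI ->; exists j.
by case=> j ->; exists j; rewrite mxE.
Qed.

Lemma lam_maxC_gram m p (M : 'M[C]_(m, p)) (V : 'M[C]_m) (phi : 'rV[R]_m) j0 :
  (m < p)%N -> V \in unitmx ->
  M *m M^t* = conjmx V (diag_mx (toCmx phi)) ->
  (forall j, 0 <= phi 0 j) -> (forall j, phi 0 j <= phi 0 j0) ->
  lam_maxC (ctrmx M *m M) = phi 0 j0.
Proof.
move=> mp Vu eM phi_ge0 phi_max.
(* M^* M and M M^* share their nonzero eigenvalues, and 0 is an eigenvalue of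
   M^* M because M is wide. *)
have eigMM x : eigenvalue (M *m M^t*) x%:C <-> exists j, x = phi 0 j.
  rewrite eM eigenvalue_conjmx_unit //; split => [/eigenvalue_diag|] [j].
    by rewrite mxE => /complexI ->; exists j.
  by move=> ->; apply/eigenvalue_diag; exists j; rewrite mxE.
rewrite ctrmxE /lam_maxC; apply: sup_attained => /= [|x eig_x].
  have [-> | phi0] := eqVneq (phi 0 j0) 0; first exact: eigenvalue0_mulmx.
  apply: eigenvalue_mulmxC; first by rewrite (fmorph_eq0 (real_complex R)).
  by apply/eigMM; exists j0.
have [-> //|x0] := eqVneq x 0.
have [j ->] : exists j, x = phi 0 j.
  by apply/eigMM/eigenvalue_mulmxC => //; rewrite (fmorph_eq0 (real_complex R)).
exact: phi_max.
Qed.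

End ComplexMatrices.

Section ImaginaryAxis.
Variable R : realType.
Local Open Scope complex_scope.
Variables (w a : R).
Hypothesis a_neq0 : a != 0.
Local Notation z := ('i * w%:C + a%:C).

Lemma imag_addr_neq0 : z != 0.
Proof. by apply: contra a_neq0 => /eqP/(congr1 (@complex.Re R)); simpc => /= <-. Qed.

Lemma imag_addr_mul_conj : z * z^* = (w ^+ 2 + a ^+ 2)%:C.
Proof. by simpc; congr (_ +i* _); ring. Qed.

Lemma imag_addr_inv_conj_scale (N : R) :
  z^-1 * N%:C * (z^-1)^* = (N / (w ^+ 2 + a ^+ 2))%:C.
Proof.
have -> : (N / (w ^+ 2 + a ^+ 2))%:C = N%:C / (z * z^*).
  by rewrite imag_addr_mul_conj fmorph_div.
by rewrite fmorphV invfM mulrA [N%:C * _]mulrC.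
Qed.

End ImaginaryAxis.

Section RealSpectrum.
Variables (R : realType) (k : nat) (A : 'M[R]_k).
Variables (V : 'M[R[i]]_k) (r : 'rV[R]_k).
Hypotheses (Vu : V \in unitmx) (eA : toCmx A = conjmx V (diag_mx (toCmx r))).

Lemma lam_min_spectral j0 : (forall j, r 0 j0 <= r 0 j) -> lam_min A = r 0 j0.
Proof.
move=> r_min; apply: inf_attained => [|x /(eigenvalue_real_spectral _ Vu eA) [j ->] //].
by apply/(eigenvalue_real_spectral _ Vu eA); exists j0.
Qed.

Lemma lam_max_spectral j0 : (forall j, r 0 j <= r 0 j0) -> lam_max A = r 0 j0.
Proof.
move=> r_max; apply: sup_attained => [|x /(eigenvalue_real_spectral _ Vu eA) [j ->] //].
by apply/(eigenvalue_real_spectral _ Vu eA); exists j0.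
Qed.

End RealSpectrum.

Lemma sv_max_invmx_spectral (R : realType) k (A : 'M[R]_k) (V : 'M[R[i]]_k)
    (r : 'rV[R]_k) j0 :
  V \in unitmx -> toCmx A = conjmx V (diag_mx (toCmx r)) -> A^T = A ->
  (forall j, 0 < r 0 j) -> (forall j, r 0 j0 <= r 0 j) ->
  sv_max (invmx A) = (r 0 j0)^-1.
Proof.
move=> Vu eA AT r_gt0 r_min; rewrite /sv_max trmx_inv AT.
have r_neq0 j : toCmx r 0 j != 0 by rewrite mxE (fmorph_eq0 (real_complex R)) gt_eqF.
have eA2 : toCmx (invmx A *m invmx A)
    = conjmx V (diag_mx (toCmx (\row_j (r 0 j)^-1 ^+ 2))).
  rewrite toCmxM toCmxV eA (conjmxV Vu (diag_mx_unit r_neq0)) -(conjmxM_unit Vu).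
  rewrite (invmx_diag r_neq0) mulmx_diag; congr (conjmx V (diag_mx _)).
  by apply/rowP => j; rewrite !mxE -(fmorphV (real_complex R)) -rmorphM expr2.
rewrite (lam_max_spectral Vu eA2 (j0 := j0)) => [|j]; rewrite !mxE.
  by rewrite sqrtr_sqr ger0_norm // invr_ge0 ltW.
by rewrite ler_sqr ?nnegrE ?invr_ge0 ?(ltW (r_gt0 _)) // lef_pV2 ?posrE.
Qed.

Lemma eigenvalue_scalar (F : fieldType) k (a x : F) : (0 < k)%N ->
  eigenvalue (a%:M : 'M[F]_k) x = (x == a).
Proof.
move=> k0; apply/idP/eqP => [/eigenvalueP [v] | ->].
  rewrite mul_mx_scalar => /eqP; rewrite -subr_eq0 -scalerBl scaler_eq0 subr_eq0.
  by move=> /orP [/eqP -> | /eqP ->] //; rewrite eqxx.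
apply/eigenvalueP; exists (const_mx 1); first by rewrite mul_mx_scalar.
by apply/eqP => /rowP /(_ (Ordinal k0)); rewrite !mxE => /eqP; rewrite oner_eq0.
Qed.

Section ScalarSpectrum.
Variables (R : realType) (k : nat) (a : R).
Hypothesis k_gt0 : (0 < k)%N.

Lemma lam_max_scalar : lam_max (a%:M : 'M[R]_k) = a.
Proof. by apply: sup_attained => [|x]; rewrite /= eigenvalue_scalar // => /eqP ->. Qed.

Lemma lam_min_scalar : lam_min (a%:M : 'M[R]_k) = a.
Proof. by apply: inf_attained => [|x]; rewrite /= eigenvalue_scalar // => /eqP ->. Qed.

End ScalarSpectrum.

Lemma dsqrt_diag (R : realType) k (d : 'rV[R]_k) :
  dsqrt (diag_mx d) = diag_mx (\row_i Num.sqrt (d 0 i)).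
Proof.
apply/matrixP => i j; rewrite !mxE eqxx mulr1n.
by case: eqP => [->|]; rewrite ?mulr1n ?mulr0n.
Qed.

Lemma dsqrt_scalar (R : realType) k (a : R) : dsqrt (a%:M : 'M[R]_k) = (Num.sqrt a)%:M.
Proof.
apply/matrixP => i j; rewrite !mxE eqxx mulr1n.
by case: (i == j); rewrite ?mulr1n ?mulr0n.
Qed.

Lemma Pi_t_scalar_weight (R : realType) n (D : 'M[R]_(n, n.-1)) (E : 'M[R]_n)
    rho sw sv s :
  Pi_t D E rho%:M sw sv s = (Num.sqrt rho)%:C%C *: Sigma_t D E rho%:M sw sv s.
Proof. by rewrite /Pi_t dsqrt_scalar /toCmx map_scalar_mx mul_scalar_mx. Qed.

Section TreeIncidence.
Variable R : realType.

Lemma oriented_edge_col_ker n m (D : 'M[R]_(n, m)) (x : 'rV[R]_n) l :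
  oriented_edge_col D l -> (x *m D) 0 l = 0 ->
  forall i k, D i l != 0 -> D k l != 0 -> x 0 i = x 0 k.
Proof.
move=> [i' [j' [ij' Di' Dj' D0]]] xDl.
have xD : (x *m D) 0 l = x 0 i' - x 0 j'.
  rewrite mxE (bigD1 i') //= (bigD1 j') 1?eq_sym //= big1 ?addr0.
    by rewrite Di' Dj' mulr1 mulrN1.
  by move=> t /andP [ti tj]; rewrite D0 ?mulr0.
have x_ends : x 0 i' = x 0 j' by apply/eqP; rewrite -subr_eq0 -xD xDl.
have x_col t : D t l != 0 -> x 0 t = x 0 i'.
  move=> Dt; have [->//|ti] := eqVneq t i'; have [->//|tj] := eqVneq t j'.
  by move: Dt; rewrite D0 ?eqxx.
by move=> i k /x_col -> /x_col ->.
Qed.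

Lemma connected_incidence_ker n m (D : 'M[R]_(n, m)) (x : 'rV[R]_n) :
  (forall l, oriented_edge_col D l) -> (forall i j, connect (inc_adj D) i j) ->
  x *m D = 0 -> forall i j, x 0 i = x 0 j.
Proof.
move=> Dcol Dcon xD i j; have /connectP [p ij ->] := Dcon i j.
elim: p i ij => [|k p IHp] i //= /andP [/andP [_ /existsP [l /andP [Dil Dkl]]] kp].
by rewrite -(IHp k kp); apply: (oriented_edge_col_ker (Dcol l)) Dil Dkl; rewrite xD mxE.
Qed.

Lemma tree_incidence_rank n (D : 'M[R]_(n, n.-1)) :
  (0 < n)%N -> tree_incidence D -> \rank D = n.-1.
Proof.
move=> n0 [Dcol _ Dcon]; apply/eqP; rewrite eqn_leq rank_leq_col /=.
have ker_const : (kermx D <= (const_mx 1 : 'rV[R]_n))%MS.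
  apply/row_subP => i; set v := row i (kermx D).
  have vD : v *m D = 0 by rewrite -row_mul mulmx_ker row0.
  have -> : v = v 0 (Ordinal n0) *: const_mx 1.
    apply/rowP => j; rewrite [RHS]mxE [const_mx _ _ _]mxE mulr1.
    exact: (connected_incidence_ker Dcol Dcon vD).
  by rewrite scalemx_sub.
have := leq_trans (mxrankS ker_const) (rank_leq_row _).
rewrite mxrank_ker leq_subLR; lia.
Qed.

Lemma tree_incidence_row_free n (D : 'M[R]_(n, n.-1)) :
  (0 < n)%N -> tree_incidence D -> row_free D^T.
Proof. by move=> n0 tD; rewrite /row_free mxrank_tr tree_incidence_rank. Qed.

End TreeIncidence.

Section Laplacian.
Variables (R : realType) (n : nat) (D : 'M[R]_(n, n.-1)).

Lemma Les_sym (E : 'M[R]_n) : E^T = E -> (Les D E)^T = Les D E.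
Proof. by move=> ET; rewrite /Les !trmx_mul trmxK trmx_inv ET mulmxA. Qed.

Variable eps : 'rV[R]_n.
Hypothesis eps_gt0 : forall i, 0 < eps 0 i.

Lemma invmx_diag_gt0 : invmx (diag_mx eps) = diag_mx (\row_i (eps 0 i)^-1).
Proof. by rewrite invmx_diag // => i; rewrite gt_eqF. Qed.

Lemma Les_eigenvalue_gt0 x :
  row_free D^T -> eigenvalue (Les D (diag_mx eps)) x -> 0 < x.
Proof.
move=> Dfree /eigenvalueP [a aL a0].
have aD0 : a *m D^T != 0 by rewrite mulmx_free_eq0.
have quadL : (a *m Les D (diag_mx eps) *m a^T) 0 0
    = ((a *m D^T) *m invmx (diag_mx eps) *m (a *m D^T)^T) 0 0.
  by rewrite /Les trmx_mul trmxK !mulmxA.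
have quadx : (a *m Les D (diag_mx eps) *m a^T) 0 0
    = x * (a *m diag_mx (const_mx 1) *m a^T) 0 0.
  by rewrite aL diag_const_mx mulmx1 -scalemxAl mxE.
have : 0 < (a *m Les D (diag_mx eps) *m a^T) 0 0.
  by rewrite quadL invmx_diag_gt0 quad_diag_gt0 // => i; rewrite mxE invr_gt0.
by rewrite quadx pmulr_lgt0 // quad_diag_gt0 // => i; rewrite mxE.
Qed.

End Laplacian.

Section FrequencyResponse.
Variables (R : realType) (n : nat) (D : 'M[R]_(n, n.-1)) (eps : 'rV[R]_n).
Variables (rho sw sv : R).
Hypotheses (eps_gt0 : forall i, 0 < eps 0 i) (rho_gt0 : 0 < rho).
Local Notation m := n.-1.
Local Notation W := (rho%:M : 'M[R]_m).
Local Notation E := (diag_mx eps).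
Local Notation L := (Les D E).

Definition input_mx :=
  row_mx (sw *: (D^T *m dsqrt (invmx E))) (- (sv *: (L *m dsqrt W))).

Lemma input_mx_gram :
  input_mx *m input_mx^T = sw ^+ 2 *: L + (sv ^+ 2 * rho) *: (L *m L).
Proof.
have LT : L^T = L by rewrite Les_sym // tr_diag_mx.
rewrite /input_mx tr_row_mx mul_row_col; congr (_ + _).
  rewrite linearZ /= trmx_mul trmxK invmx_diag_gt0 // dsqrt_diag tr_diag_mx.
  rewrite -scalemxAr -scalemxAl scalerA -expr2; congr (_ *: _).
  rewrite mulmxA -(mulmxA D^T) mulmx_diag /Les invmx_diag_gt0 //.
  congr (_ *m diag_mx _ *m _); apply/rowP => j.
  by rewrite !mxE -expr2 sqr_sqrtr // invr_ge0 ltW.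
rewrite dsqrt_scalar mul_mx_scalar scalerA -scaleNr linearZ /= LT.
by rewrite -scalemxAr -scalemxAl scalerA mulrNN -expr2 exprMn sqr_sqrtr // ltW.
Qed.

Definition mode_gain (x w : R) : R :=
  (sw ^+ 2 * x + sv ^+ 2 * rho * x ^+ 2) / (w ^+ 2 + (rho * x) ^+ 2).

Section ModeGain.
Variable x : R.
Hypothesis x_gt0 : 0 < x.

Let numer_ge0 : 0 <= sw ^+ 2 * x + sv ^+ 2 * rho * x ^+ 2 :=
  addr_ge0 (mulr_ge0 (sqr_ge0 _) (ltW x_gt0))
           (mulr_ge0 (mulr_ge0 (sqr_ge0 _) (ltW rho_gt0)) (sqr_ge0 _)).

Let denom0_gt0 : 0 < (rho * x) ^+ 2 := exprn_gt0 _ (mulr_gt0 rho_gt0 x_gt0).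

Lemma mode_gain_ge0 w : 0 <= mode_gain x w.
Proof. by rewrite divr_ge0 // addr_ge0 ?sqr_ge0. Qed.

Lemma mode_gain_le_dc w : mode_gain x w <= mode_gain x 0.
Proof.
rewrite ler_wpM2l // expr0n add0r lef_pV2 ?posrE ?lerDr ?sqr_ge0 //.
by rewrite ltr_wpDl ?sqr_ge0.
Qed.

Lemma mode_gain_dcE : mode_gain x 0 = sw ^+ 2 / (rho ^+ 2 * x) + sv ^+ 2 / rho.
Proof. by rewrite /mode_gain; field; rewrite !gt_eqF. Qed.

End ModeGain.

Lemma mode_gain_dc_anti x y : 0 < x -> x <= y -> mode_gain y 0 <= mode_gain x 0.
Proof.
move=> x_gt0 xy; have y_gt0 := lt_le_trans x_gt0 xy.
rewrite !mode_gain_dcE // lerD2r ler_wpM2l ?sqr_ge0 //.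
by rewrite lef_pV2 ?posrE ?mulr_gt0 ?exprn_gt0 // ler_wpM2l ?sqr_ge0.
Qed.

Section Spectral.
Local Open Scope complex_scope.
Local Open Scope sesquilinear_scope.
Variables (V : 'M[R[i]]_m) (r : 'rV[R]_m).
Hypotheses (Vu : V \is unitarymx) (r_gt0 : forall j, 0 < r 0 j).
Hypothesis eL : toCmx L = conjmx V (diag_mx (toCmx r)).

Let Vunit : V \in unitmx := unitarymx_unit Vu.

Lemma Sigma_t_gram c w (M := c%:C *: Sigma_t D E W sw sv ('i * w%:C)) :
  M *m M^t* = conjmx V (diag_mx (toCmx (\row_j (c ^+ 2 * mode_gain (r 0 j) w)))).
Proof.
set s := 'i * w%:C; set z := \row_j (s + (rho * r 0 j)%:C).
have z_neq0 j : z 0 j != 0 by rewrite mxE imag_addr_neq0 // gt_eqF ?mulr_gt0.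
have eK : s%:M + toCmx (L *m W) = conjmx V (diag_mx z).
  rewrite mul_mx_scalar toCmxZ eL -(conjmxZ V) -(conjmx_scalar_unit Vunit s).
  rewrite -(conjmxD V).
  congr (conjmx V _); apply/matrixP => i j; rewrite !mxE.
  by case: (i == j); rewrite ?mulr1n ?mulr0n ?mulr0 ?addr0 // -rmorphM.
have eSigma : Sigma_t D E W sw sv s
    = conjmx V (diag_mx (\row_j (z 0 j)^-1)) *m toCmx input_mx.
  by rewrite /Sigma_t eK (conjmxV Vunit (diag_mx_unit z_neq0)) (invmx_diag z_neq0).
have eB : toCmx input_mx *m (toCmx input_mx)^t*
    = conjmx V (diag_mx (\row_j (sw ^+ 2 * r 0 j + sv ^+ 2 * rho * r 0 j ^+ 2)%:C)).
  rewrite toCmx_trC -toCmxM input_mx_gram toCmxD !toCmxZ toCmxM eL.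
  rewrite -(conjmxM_unit Vunit) -!(conjmxZ V) -(conjmxD V) mulmx_diag.
  congr (conjmx V _); apply/matrixP => i j; rewrite !mxE.
  case: (i == j); rewrite ?mulr1n ?mulr0n ?mulr0 ?addr0 //.
  by simpc; congr (_ +i* _); ring.
rewrite /M eSigma trC_scale trC_mul (conjmx_trC _ Vu) -scalemxAl -scalemxAr scalerA.
rewrite -mulmxA (mulmxA (toCmx input_mx)) eB mulmxA -!(conjmxM_unit Vunit).
rewrite trC_diag -(conjmxZ V).
congr (conjmx V _); rewrite !mulmx_diag; apply/matrixP => i j; rewrite !mxE.
case: (i == j); rewrite ?mulr1n ?mulr0n ?mulr0 //.
rewrite imag_addr_inv_conj_scale ?gt_eqF ?mulr_gt0 //.
by rewrite conj_Creal ?complex_real // -!rmorphM mulrA -expr2.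
Qed.

Hypothesis n_ge2 : (2 <= n)%N.
Variable jmin : 'I_m.
Hypothesis r_jmin : forall j, r 0 jmin <= r 0 j.

Lemma sv_maxC_Sigma_t c w j0 :
  (forall j, mode_gain (r 0 j) w <= mode_gain (r 0 j0) w) ->
  sv_maxC (c%:C *: Sigma_t D E W sw sv ('i * w%:C))
    = Num.sqrt (c ^+ 2 * mode_gain (r 0 j0) w).
Proof.
move=> j0_max; rewrite /sv_maxC (lam_maxC_gram (j0 := j0) _ Vunit (Sigma_t_gram c w)).
- by rewrite mxE.
- by rewrite -{1}(add0n m) ltn_add2r; case: n n_ge2.
- by move=> j; rewrite mxE mulr_ge0 ?sqr_ge0 ?mode_gain_ge0.
- by move=> j; rewrite !mxE ler_wpM2l ?sqr_ge0.
Qed.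

Lemma Hinf_norm_scaled_Sigma_t_spectral c (Phi : R[i] -> 'M[R[i]]_(m, n + m)) :
  (forall s, Phi s = c%:C *: Sigma_t D E W sw sv s) ->
  Hinf_norm Phi = Num.sqrt (c ^+ 2 * mode_gain (r 0 jmin) 0).
Proof.
move=> ePhi; rewrite /Hinf_norm; apply: sup_attained => [|_ [w _ <-]].
  exists 0 => //; rewrite ePhi.
  have [j0 j0_max] := argmax_exists jmin (fun j => mode_gain (r 0 j) 0).
  rewrite (sv_maxC_Sigma_t c j0_max); congr (Num.sqrt (_ * _)).
  by apply/le_anti; rewrite j0_max mode_gain_dc_anti.
have [j0 j0_max] := argmax_exists jmin (fun j => mode_gain (r 0 j) w).
rewrite ePhi (sv_maxC_Sigma_t c j0_max) ler_sqrt; last first.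
  exact: mulr_ge0 (sqr_ge0 c) (mode_gain_ge0 (r_gt0 _) _).
by rewrite ler_wpM2l ?sqr_ge0 // (le_trans (mode_gain_le_dc _ _)) ?mode_gain_dc_anti.
Qed.

End Spectral.

End FrequencyResponse.

Section TreeNetwork.
Local Open Scope complex_scope.
Variables (R : realType) (n : nat) (D : 'M[R]_(n, n.-1)) (eps : 'rV[R]_n).
Hypotheses (n_ge2 : (2 <= n)%N) (tD : tree_incidence D).
Hypothesis eps_gt0 : forall i, 0 < eps 0 i.
Local Notation m := n.-1.
Local Notation L := (Les D (diag_mx eps)).

Lemma tree_edges_gt0 : (0 < m)%N.
Proof. by case: n n_ge2 => [|[]]. Qed.

Lemma Les_spectral : exists V : 'M[R[i]]_m, exists r : 'rV[R]_m,
  [/\ V \is unitarymx, toCmx L = conjmx V (diag_mx (toCmx r)) & forall j, 0 < r 0 j].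
Proof.
have [V [r [Vu eL]]] := real_symmetric_spectral (Les_sym D (tr_diag_mx eps)).
exists V, r; split => // j; apply: (Les_eigenvalue_gt0 eps_gt0).
  exact: tree_incidence_row_free (ltnW n_ge2) tD.
by apply/(eigenvalue_real_spectral _ (unitarymx_unit Vu) eL); exists j.
Qed.

Lemma Les_spectral_min : exists V : 'M[R[i]]_m, exists r : 'rV[R]_m, exists jmin,
  [/\ V \is unitarymx, toCmx L = conjmx V (diag_mx (toCmx r)), forall j, 0 < r 0 j,
      forall j, r 0 jmin <= r 0 j & lam_min L = r 0 jmin].
Proof.
have [V [r [Vu eL r_gt0]]] := Les_spectral.
have [jmin r_jmin] := argmin_exists (Ordinal tree_edges_gt0) (fun j => r 0 j).
exists V, r, jmin; split => //; exact: lam_min_spectral (unitarymx_unit Vu) eL _ r_jmin.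
Qed.

Lemma lam_min_Les_gt0 : 0 < lam_min L.
Proof. by have [V [r [jmin [_ _ r_gt0 _ ->]]]] := Les_spectral_min. Qed.

Lemma lam_min_le_max_Les : lam_min L <= lam_max L.
Proof.
have [V [r [jmin [Vu eL _ r_jmin ->]]]] := Les_spectral_min.
have [jmax r_jmax] := argmax_exists jmin (fun j => r 0 j).
by rewrite (lam_max_spectral (unitarymx_unit Vu) eL r_jmax).
Qed.

Lemma sv_max_invmx_Les : sv_max (invmx L) = (lam_min L)^-1.
Proof.
have [V [r [jmin [Vu eL r_gt0 r_jmin ->]]]] := Les_spectral_min.
apply: sv_max_invmx_spectral (unitarymx_unit Vu) eL _ r_gt0 r_jmin.
by rewrite Les_sym ?tr_diag_mx.
Qed.

Lemma Hinf_norm_scaled_Sigma_t rho sw sv c (Phi : R[i] -> 'M[R[i]]_(m, n + m)) :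
  0 < rho -> (forall s, Phi s = c%:C *: Sigma_t D (diag_mx eps) rho%:M sw sv s) ->
  Hinf_norm Phi = Num.sqrt (c ^+ 2 * (sw ^+ 2 / (rho ^+ 2 * lam_min L) + sv ^+ 2 / rho)).
Proof.
move=> rho_gt0 ePhi; have [V [r [jmin [Vu eL r_gt0 r_jmin ->]]]] := Les_spectral_min.
rewrite (Hinf_norm_scaled_Sigma_t_spectral eps_gt0 rho_gt0 Vu r_gt0 eL n_ge2 r_jmin ePhi).
by rewrite mode_gain_dcE.
Qed.

End TreeNetwork.

Theorem corollary3 (R : realType) (n : nat) (hn : (2 <= n)%N)
    (D : 'M[R]_(n, n.-1)) (hD : tree_incidence D)
    (rho : R) (hrho : 0 < rho)
    (eps : 'rV[R]_n) (heps : forall i, 0 < eps 0 i)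
    (sw sv : R) :
  let W : 'M[R]_n.-1 := rho%:M in
  let E : 'M[R]_n := diag_mx eps in
  let L := Les D E in
  let Wh := dsqrt W in
  let L1 := (sw ^+ 2 + sv ^+ 2 * lam_min L * lam_max Wh ^+ 2)
            / (lam_min L * lam_max Wh ^+ 4) in
  let L2 := (sw ^+ 2 + sv ^+ 2 * lam_max L * lam_max Wh * lam_min Wh)
            / (lam_max L * lam_max Wh ^+ 3 * lam_min Wh) in
  let U := (sw ^+ 2 + sv ^+ 2 * lam_min L * lam_min Wh ^+ 2)
            / (lam_min L * lam_min Wh ^+ 4) in
  [/\ Hinf_norm (Sigma_t D E W sw sv) ^+ 2
        = rho^-1 * Hinf_norm (Pi_t D E W sw sv) ^+ 2,
      rho^-1 * Hinf_norm (Pi_t D E W sw sv) ^+ 2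
        = (rho ^+ 2)^-1 * sw ^+ 2 * sv_max (invmx L) + rho^-1 * sv ^+ 2,
      (rho ^+ 2)^-1 * sw ^+ 2 * sv_max (invmx L) + rho^-1 * sv ^+ 2
        = Num.max L1 L2
    & Num.max L1 L2 = U].
Proof.
cbv zeta.
have m_gt0 := tree_edges_gt0 hn.
rewrite (Hinf_norm_scaled_Sigma_t hn hD heps (c := 1) hrho (fun s => esym (scale1r _))).
rewrite (Hinf_norm_scaled_Sigma_t hn hD heps hrho (Pi_t_scalar_weight _ _ _ _ _)).
rewrite sv_max_invmx_Les // dsqrt_scalar lam_max_scalar // lam_min_scalar //.
have := lam_min_le_max_Les hn hD heps; have := lam_min_Les_gt0 hn hD heps.
move: (lam_min _) (lam_max _) => a b a_gt0 ab; have b_gt0 := lt_le_trans a_gt0 ab.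
have gain_ge0 : 0 <= sw ^+ 2 / (rho ^+ 2 * a) + sv ^+ 2 / rho.
  by rewrite addr_ge0 ?divr_ge0 ?sqr_ge0 ?ltW ?mulr_gt0 ?exprn_gt0.
rewrite !sqr_sqrtr ?mulr_ge0 ?sqr_ge0 ?(ltW hrho) //.
have q2 : Num.sqrt rho * Num.sqrt rho = rho by rewrite -expr2 sqr_sqrtr ?ltW.
have q4 : Num.sqrt rho ^+ 4 = rho ^+ 2 by rewrite (exprM _ 2 2) sqr_sqrtr ?ltW.
rewrite -[_ * Num.sqrt rho * Num.sqrt rho]mulrA q2 -[_ * _ ^+ 3 * _]mulrA -exprSr q4.
have gainE x :
  0 < x -> (sw ^+ 2 + sv ^+ 2 * x * rho) / (x * rho ^+ 2) = mode_gain rho sw sv x 0.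
  by move=> x_gt0; rewrite /mode_gain; field; rewrite !gt_eqF.
rewrite !gainE // max_l ?mode_gain_dc_anti // mode_gain_dcE //.
by split => //; field; rewrite ?gt_eqF.
Qed.
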